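(* Let $\mathrm{R}$ be a real closed field, $\mathrm{C}=\mathrm{R}[i]$, let $F/G\in\mathrm{C}(Z)\setminus\{0\}$, $\gamma\in\mathrm{C}\setminus\{0\}$ and let $\Gamma=[x_0,x_1]\times[y_0,y_1]\subset\mathrm{R}^2$ with $x_0<x_1$, $y_0<y_1$, such that $\mathrm{val}_z(F/G)$ is even for every vertex $z$ of $\Gamma$. Then $\mathrm{w}(F/G\mid\partial\Gamma)=\mathrm{w}(\gamma F/G\mid\partial\Gamma)$.
   Context: Points $(x,y)\in\mathrm{R}^2$ are identified with $x+iy\in\mathrm{C}$. For nonzero $P\in\mathrm{R}[X]$ and $x\in\mathrm{R}$ write uniquely $P=(X-x)^{\mathrm{mult}_x(P)}P_x$ with $P_x(x)\neq0$; for $P,Q\neq0$ set $\mathrm{val}_x(P/Q)=\mathrm{mult}_x(P)-\mathrm{mult}_x(Q)$. For $P,Q\in\mathrm{R}[X]$, $x\in\mathrm{R}$: $\mathrm{Ind}^+_x(P,Q)=\tfrac12\,\mathrm{sign}(P_x(x)Q_x(x))$ and $\mathrm{Ind}^-_x(P,Q)=\tfrac12(-1)^{\mathrm{val}_x(P/Q)}\mathrm{sign}(P_x(x)Q_x(x))$ if $P\ne0$, $Q\neq0$ and $\mathrm{val}_x(P/Q)<0$, and both are $0$ otherwise; $\mathrm{Ind}_x=\mathrm{Ind}^+_x-\mathrm{Ind}^-_x$. For $a<b$, $\mathrm{Ind}_a^b(P,Q)=\mathrm{Ind}_a^+(P,Q)+\sum_{x\in(a,b)}\mathrm{Ind}_x(P,Q)-\mathrm{Ind}_b^-(P,Q)$;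 $\mathrm{Ind}_a^b=-\mathrm{Ind}_b^a$ if $b<a$, and $\mathrm{Ind}_a^a=0$. For $F\in\mathrm{C}[X,Y]$ let $F_{\rm re},F_{\rm im}\in\mathrm{R}[X,Y]$ with $F=F_{\rm re}+iF_{\rm im}$, and $\overline F=F_{\rm re}-iF_{\rm im}$. Define $\mathrm{w}(F\mid\partial\Gamma)=\tfrac12\big(\mathrm{Ind}_{x_0}^{x_1}(F_{\rm re}(T,y_0),F_{\rm im}(T,y_0))+\mathrm{Ind}_{y_0}^{y_1}(F_{\rm re}(x_1,T),F_{\rm im}(x_1,T))+\mathrm{Ind}_{x_1}^{x_0}(F_{\rm re}(T,y_1),F_{\rm im}(T,y_1))+\mathrm{Ind}_{y_1}^{y_0}(F_{\rm re}(x_0,T),F_{\rm im}(x_0,T))\big)$. $\mathrm{C}[Z]\subset\mathrm{C}[X,Y]$ via $Z=X+iY$. For $F,G\in\mathrm{C}[X,Y]$, $G\neq0$, $\mathrm{w}(F/G\mid\partial\Gamma):=\mathrm{w}(F\overline G\mid\partial\Gamma)$ (independent of the representation). For nonzero $F\in\mathrm{C}[Z]$, $z\in\mathrm{C}$ write $F=(Z-z)^{\mathrm{mult}_z(F)}F_z$ with $F_z(z)\ne0$, and $\mathrm{val}_z(F/G)=\mathrm{mult}_z(F)-\mathrm{mult}_z(G)$ for $F,G\ne0$. *)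

From HB Require Import structures.
From mathcomp Require Import all_boot all_order all_algebra.
From mathcomp Require Import polyrcf complex.
Set Implicit Arguments. Unset Strict Implicit. Unset Printing Implicit Defensive.
Import Order.TTheory GRing.Theory Num.Theory.
Local Open Scope ring_scope.

Section Index.
Variable R : rcfType.
Implicit Types (P Q : {poly R}) (x a b : R).

Definition mult x P : nat := mup x P.
Definition pcofactor x P : {poly R} := P %/ ('X - x%:P) ^+ mult x P.
Definition valR x P Q : int := (mult x P)%:Z - (mult x Q)%:Z.

Definition sgprod x P Q : R :=
  Num.sg ((pcofactor x P).[x] * (pcofactor x Q).[x]).

Definition IndP x P Q : R :=
  if [&& P != 0, Q != 0 & valR x P Q < 0] then 2^-1 * sgprod x P Q else 0.
Definition IndM x P Q : R :=
  if [&& P != 0, Q != 0 & valR x P Q < 0]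
  then 2^-1 * ((-1) ^ valR x P Q * sgprod x P Q) else 0.
Definition Ind x P Q : R := IndP x P Q - IndM x P Q.

(* The sum over x in (a,b) is finitely supported:
   Ind_x(P,Q) <> 0 forces Q(x) = 0; we sum over the (ordered, duplicate-free)
   list of roots of Q in ]a,b[ (polyrcf.roots; empty when Q = 0). *)
Definition IndAB_lt a b P Q : R :=
  IndP a P Q + \sum_(x <- roots Q a b) Ind x P Q - IndM b P Q.

Definition IndAB a b P Q : R :=
  if a < b then IndAB_lt a b P Q
  else if b < a then - IndAB_lt b a P Q else 0.
End Index.

(* C[X,Y] is represented as {poly {poly C}}: the outer variable is Y, the
   inner (coefficient) variable is X. *)
Section Winding.
Variable R : rcfType.
Local Notation C := (R[i]).

Definition bipoly := {poly {poly C}}.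

Definition bre (F : bipoly) : {poly {poly R}} := map_poly (map_poly (@complex.Re R)) F.
Definition bim (F : bipoly) : {poly {poly R}} := map_poly (map_poly (@complex.Im R)) F.
Definition bconj (F : bipoly) : bipoly := map_poly (map_poly conjc) F.

Definition evalY (P : {poly {poly R}}) (y : R) : {poly R} := P.[y%:P].
Definition evalX (P : {poly {poly R}}) (x : R) : {poly R} := map_poly (fun p => p.[x]) P.

(* embedding C[Z] -> C[X,Y], Z = X + iY *)
Definition Zpoly : bipoly := ('X : {poly C})%:P + ('i : C)%:P%:P * 'X.
Definition ofZ (F : {poly C}) : bipoly :=
  (map_poly (fun c : C => c%:P%:P) F : {poly bipoly}).[Zpoly].

Definition wind (F : bipoly) (x0 x1 y0 y1 : R) : R :=
  2^-1 * (IndAB x0 x1 (evalY (bre F) y0) (evalY (bim F) y0)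
        + IndAB y0 y1 (evalX (bre F) x1) (evalX (bim F) x1)
        + IndAB x1 x0 (evalY (bre F) y1) (evalY (bim F) y1)
        + IndAB y1 y0 (evalX (bre F) x0) (evalX (bim F) x0)).

Definition windQ (F G : bipoly) x0 x1 y0 y1 : R := wind (F * bconj G) x0 x1 y0 y1.

Definition valC (z : C) (F G : {poly C}) : int := (mup z F)%:Z - (mup z G)%:Z.
End Winding.

(* Put H = F * conj G.  On an edge of the rectangle H restricts to h = P + i Q, and
   multiplying F by gamma = al + i be turns (P, Q) into (al P - be Q, be P + al Q).
   When be <> 0, the local Cauchy indices of the two pairs differ at each point x by
   the half signs of be Q Q' just right and just left of x, corrected by a term living
   where Q and Q' vanish to the same order.  The half signs telescope between
   consecutive roots of Q Q', so along an edge the indices differ only by correction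
   terms at its two ends.  At a vertex z these terms depend only on the leading
   coefficient of h at z, and those of the horizontal and of the vertical edge differ
   by the factor i^m (-i)^n, where m and n are the orders of F and G at z; this factor
   is real when val_z(F/G) = m - n is even, so the end terms cancel around the
   rectangle.  A real gamma is the product of the non-real gamma * (-i) and i. *)

From mathcomp Require Import all_boot all_order all_algebra.
From mathcomp Require Import polyrcf complex.
From mathcomp Require Import ring lra.
Import Order.TTheory GRing.Theory Num.Theory.
Set Implicit Arguments. Unset Strict Implicit. Unset Printing Implicit Defensive.
Local Open Scope ring_scope.

Local Notation XsubC x := ('X - x%:P).

Section Multiplicity.
Variable K : fieldType.
Implicit Types (x : K) (p : {poly K}).

Lemma mup_XsubCX_mul x m p : ~~ root p x -> mup x (XsubC x ^+ m * p) = m.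
Proof. by move=> px; rewrite mupMl // mup_XsubCX eqxx. Qed.

Lemma mup_factor x p : p != 0 ->
  exists2 q, p = XsubC x ^+ mup x p * q & ~~ root q x.
Proof.
move=> p0; have /dvdpP[q pE] : XsubC x ^+ mup x p %| p by rewrite -mup_geq.
exists q; first by rewrite mulrC.
apply: contraTN (leqnn (mup x p)) => qx; rewrite -ltnNge mup_geq // exprS.
by rewrite [X in _ %| X]pE dvdp_mul ?dvdp_XsubCl.
Qed.

End Multiplicity.

Section CauchyIndex.
Variable R : rcfType.
Implicit Types (P Q A B : {poly R}) (x a b : R).

Definition cofval x P : R := (pcofactor x P).[x].

Lemma pcofactor_XsubCX_mul x m A : ~~ root A x -> pcofactor x (XsubC x ^+ m * A) = A.
Proof.
move=> Ax; rewrite /pcofactor /mult mup_XsubCX_mul // mulKp //.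
by rewrite expf_neq0 // polyXsubC_eq0.
Qed.

Lemma cofval_XsubCX_mul x m A : ~~ root A x -> cofval x (XsubC x ^+ m * A) = A.[x].
Proof. by move=> Ax; rewrite /cofval pcofactor_XsubCX_mul. Qed.

Lemma IndPM_nopole x P Q : XsubC x ^+ mult x Q %| P -> IndP x P Q = 0 /\ IndM x P Q = 0.
Proof.
move=> dvdQP; suff /negbTE noPole : ~~ [&& P != 0, Q != 0 & valR x P Q < 0].
  by rewrite /IndP /IndM noPole.
apply/and3P => -[P0 _].
by rewrite /valR subr_lt0 ltz_nat ltnNge /mult mup_geq // dvdQP.
Qed.

Lemma IndPM_common_factor x k P Q A B : ~~ root B x ->
  P = XsubC x ^+ k * A -> Q = XsubC x ^+ k * B -> IndP x P Q = 0 /\ IndM x P Q = 0.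
Proof.
by move=> Bx PA QB; apply: IndPM_nopole; rewrite PA QB /mult mup_XsubCX_mul ?dvdp_mulIl.
Qed.

Lemma IndPM_pole x P Q k m A B : ~~ root A x -> ~~ root B x -> (k < m)%N ->
    P = XsubC x ^+ k * A -> Q = XsubC x ^+ m * B ->
  IndP x P Q = 2^-1 * Num.sg (A.[x] * B.[x]) /\
  IndM x P Q = 2^-1 * ((-1) ^+ (k + m) * Num.sg (A.[x] * B.[x])).
Proof.
move=> Ax Bx km PE QE.
have XsubCX_mul_neq0 j C : ~~ root C x -> XsubC x ^+ j * C != 0.
  move=> Cx; rewrite mulf_neq0 ?expf_neq0 ?polyXsubC_eq0 //.
  by apply: contraNneq Cx => ->; rewrite root0.
have vE : valR x P Q = k%:Z - m%:Z by rewrite /valR PE QE /mult !mup_XsubCX_mul.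
rewrite /IndP /IndM PE QE !XsubCX_mul_neq0 // -PE -QE vE subr_lt0 ltz_nat km.
rewrite /sgprod /= -!/(cofval _ _) PE QE !cofval_XsubCX_mul //; split => //.
rewrite expN1r distnEr ?(ltnW km) // -signr_odd oddB ?(ltnW km) //.
by rewrite -[in RHS]signr_odd oddD addbC.
Qed.

Lemma IndAB_lt_nopole a b P Q : (forall x, XsubC x ^+ mult x Q %| P) ->
  IndAB_lt a b P Q = 0.
Proof.
move=> dvdQP; rewrite /IndAB_lt big1 => [|x _].
  have [-> _] := IndPM_nopole (dvdQP a); have [_ ->] := IndPM_nopole (dvdQP b).
  by rewrite addr0 subr0.
by rewrite /Ind; have [-> ->] := IndPM_nopole (dvdQP x); rewrite subrr.
Qed.

Lemma IndAB_lt_proportional a b c Q : IndAB_lt a b (c%:P * Q) Q = 0.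
Proof.
apply: IndAB_lt_nopole => x; apply: dvdp_mull.
by rewrite /mult; have [->|Q0] := eqVneq Q 0; rewrite ?dvdp0 // -mup_geq.
Qed.

Lemma IndAB_lt_Q0 a b P : IndAB_lt a b P 0 = 0.
Proof.
by rewrite /IndAB_lt roots0 big_nil addr0 /IndP /IndM eqxx /= !andbF subr0.
Qed.

Lemma Ind_nonroot x P Q : ~~ root Q x -> Ind x P Q = 0.
Proof.
move=> Qx; rewrite /Ind; have [|->->] := @IndPM_nopole x P Q; last by rewrite subrr.
by rewrite /mult mupNroot // expr0 dvd1p.
Qed.

Lemma sum_Ind_roots_mulr a b P Q Q2 : Q * Q2 != 0 ->
  \sum_(x <- roots Q a b) Ind x P Q = \sum_(x <- roots (Q * Q2) a b) Ind x P Q.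
Proof.
move=> QQ2; have Q0 : Q != 0 by apply: contraNneq QQ2 => ->; rewrite mul0r.
rewrite [RHS](bigID (root Q)) /= [X in _ = _ + X]big1 ?addr0 => [|x /Ind_nonroot //].
rewrite -[RHS]big_filter; apply: perm_big.
apply: uniq_perm => [||x]; rewrite ?filter_uniq ?uniq_roots // mem_filter.
have [xab|xab] := boolP (x \in `]a, b[); last first.
  by rewrite !(contraNF (@roots_in _ _ _ _ x)) ?andbF.
by rewrite -!root_is_roots // rootM andb_orr andbb; case: root.
Qed.

Lemma telescope_roots (V : zmodType) (f g : R -> V) p a b : p != 0 -> a < b ->
    (forall u v, u < v -> {in `]u, v[, forall t, ~~ root p t} -> f u = g v) ->
  f a + \sum_(y <- roots p a b) (f y - g y) - g b = 0.
Proof.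
move=> p0 + fg; have [s rootsE] : {s | roots p a b = s} by exists (roots p a b).
rewrite rootsE; elim: s a rootsE => [|x s IH] a rootsE ab.
  by rewrite big_nil addr0 (fg a b) ?subrr // => t /(roots_nil p0 rootsE).
move/eqP: rootsE; rewrite roots_cons in_itv /= => /and5P[_ /andP[ax xb] /eqP noroot_ax _].
move=> /eqP /IH /(_ xb) IHx.
rewrite big_cons (fg a x) // => [|t /(roots_nil p0 noroot_ax) //].
by rewrite addrA [g x + _]addrC subrK IHx.
Qed.

End CauchyIndex.

Section CofactorSign.
Variable R : rcfType.
Implicit Types (P Q A : {poly R}) (x t u v : R).

Lemma sgr_horner_XsubCX_mul (i : interval R) x t m A :
    {in i, forall s, ~~ root A s} -> x \in i -> t \in i ->
  Num.sg (XsubC x ^+ m * A).[t] = Num.sg ((t - x) ^+ m) * Num.sg A.[x].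
Proof.
move=> Ai xi ti; rewrite hornerM sgrM horner_exp hornerXsubC.
by rewrite (polyrN0_itv Ai ti xi).
Qed.

Lemma sgr_cofval_next_root Q u v : Q != 0 -> u < v ->
    {in `]u, v[, forall t, ~~ root Q t} ->
  Num.sg (cofval u Q) = (-1) ^+ mult v Q * Num.sg (cofval v Q).
Proof.
move=> Q0 uv noroot_uv; set w := (u + v) / 2; have [uw wv] := midf_lt uv.
have [A QA Au] := mup_factor u Q0; have [B QB Bv] := mup_factor v Q0.
have noroot_cof C k x (i : interval R) : Q = XsubC x ^+ k * C -> ~~ root C x ->
    {subset i <= [predU1 x & `]u, v[]} -> {in i, forall t, ~~ root C t}.
  move=> QC Cx sub_i t /sub_i /predU1P[-> //|tuv].
  by apply: contra (noroot_uv t tuv); rewrite QC rootM => ->; rewrite orbT.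
have sgQw_u : Num.sg Q.[w] = Num.sg A.[u].
  rewrite {1}QA (@sgr_horner_XsubCX_mul `[u, w]) ?in_itv /= ?lexx ?ltW //.
    by rewrite gtr0_sg ?exprn_gt0 ?subr_gt0 // mul1r.
  apply: noroot_cof QA Au _ => t; rewrite in_itv /= => /andP[ut tw].
  by rewrite inE in_itv /= (le_lt_trans tw wv) andbT eq_sym -le_eqVlt.
have sgQw_v : Num.sg Q.[w] = (-1) ^+ mult v Q * Num.sg B.[v].
  rewrite {1}QB (@sgr_horner_XsubCX_mul `[w, v]) ?in_itv /= ?lexx ?ltW //.
    by rewrite sgrX ltr0_sg ?subr_lt0.
  apply: noroot_cof QB Bv _ => t; rewrite in_itv /= => /andP[wt tv].
  by rewrite inE in_itv /= (lt_le_trans uw wt) -le_eqVlt.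
have cofval_u : cofval u Q = A.[u] by rewrite QA cofval_XsubCX_mul.
have cofval_v : cofval v Q = B.[v] by rewrite QB cofval_XsubCX_mul.
by rewrite cofval_u cofval_v -sgQw_u sgQw_v.
Qed.

End CofactorSign.

Section Rotation.
Variable R : rcfType.
Variables (al be : R) (P Q : {poly R}).
Hypothesis be0 : be != 0.
Local Notation P' := (al%:P * P - be%:P * Q).
Local Notation Q' := (be%:P * P + al%:P * Q).
Implicit Types (x u v a b : R).

(* [P' + i Q'] is [(al + i be) * (P + i Q)].  [half_sg_right x] is half the sign of
   [be * Q * Q'] just to the right of [x], [half_sg_left x] the same just to its left. *)
Definition half_sg_right x := 2^-1 * Num.sg (be * cofval x Q * cofval x Q').
Definition half_sg_left x := (-1) ^+ (mult x Q + mult x Q') * half_sg_right x.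
Definition index_defect x :=
  if [&& Q != 0, Q' != 0 & mult x Q == mult x Q'] then half_sg_right x else 0.

Lemma rotate_common_factor x k A B :
    Q = XsubC x ^+ k * A -> Q' = XsubC x ^+ k * B ->
  P = XsubC x ^+ k * (be^-1%:P * (B - al%:P * A)) /\
  P' = XsubC x ^+ k * (be^-1%:P * (al%:P * B - (al%:P ^+ 2 + be%:P ^+ 2) * A)).
Proof.
have cancel_be S : S = be^-1%:P * (be%:P * S) by rewrite mulrA -polyCM mulVf ?mul1r.
have PE : be%:P * P = Q' - al%:P * Q by ring.
have P'E : be%:P * P' = al%:P * Q' - (al%:P ^+ 2 + be%:P ^+ 2) * Q by ring.
move=> QA Q'B; rewrite {1}(cancel_be P) (cancel_be P') PE P'E Q'B QA; split; ring.
Qed.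

Lemma IndPM_rotate x : Q != 0 -> Q' != 0 ->
  IndP x P Q - IndP x P' Q' = half_sg_right x - index_defect x /\
  IndM x P Q - IndM x P' Q' = half_sg_left x - index_defect x.
Proof.
move=> Q0 Q'0; have [A QA Ax] := mup_factor x Q0; have [B Q'B Bx] := mup_factor x Q'0.
have cofval_Q : cofval x Q = A.[x] by rewrite {1}QA cofval_XsubCX_mul.
have cofval_Q' : cofval x Q' = B.[x] by rewrite {1}Q'B cofval_XsubCX_mul.
rewrite /index_defect /half_sg_left /half_sg_right Q0 Q'0 cofval_Q cofval_Q' /mult.
move: (mup x Q) (mup x Q') QA Q'B => m m' QA Q'B.
have s_gt0 : 0 < al ^+ 2 + be ^+ 2 by rewrite ltr_pwDr ?sqr_ge0 ?exprn_even_gt0.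
have nonroot c C : c != 0 -> C.[x] = c -> ~~ root C x by move=> c0; rewrite /root => ->.
have [mm'|m'm|mm'] := ltngtP m m'.
- have Q'B' : Q' = XsubC x ^+ m * (XsubC x ^+ (m' - m) * B).
    by rewrite mulrA -exprD subnKC // ltnW.
  have [PE P'E] := rotate_common_factor QA Q'B'.
  have [-> ->] := IndPM_common_factor Ax PE QA.
  set C := be^-1%:P * _ in P'E.
  have Cx : C.[x] = - (be^-1 * (al ^+ 2 + be ^+ 2)) * A.[x].
    by rewrite /C !hornerE subrr expr0n subn_eq0 leqNgt mm' /=; ring.
  have C0 : - (be^-1 * (al ^+ 2 + be ^+ 2)) * A.[x] != 0.
    by rewrite mulNr oppr_eq0 !mulf_neq0 ?invr_eq0 ?(gt_eqF s_gt0) // -rootE.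
  have [-> ->] := IndPM_pole (nonroot _ _ C0 Cx) Bx mm' P'E Q'B.
  rewrite Cx !sgrM sgrN !sgrM sgrV (gtr0_sg s_gt0) /=; split; ring.
- have QA' : Q = XsubC x ^+ m' * (XsubC x ^+ (m - m') * A).
    by rewrite QA mulrA -exprD subnKC // ltnW.
  have [PE P'E] := rotate_common_factor QA' Q'B.
  have [-> ->] := IndPM_common_factor Bx P'E Q'B.
  set C := be^-1%:P * _ in PE.
  have Cx : C.[x] = be^-1 * B.[x].
    by rewrite /C !hornerE subrr expr0n subn_eq0 leqNgt m'm /=; ring.
  have C0 : be^-1 * B.[x] != 0 by rewrite mulf_neq0 ?invr_eq0 // -rootE.
  have [-> ->] := IndPM_pole (nonroot _ _ C0 Cx) Ax m'm PE QA.
  rewrite Cx addnC !sgrM sgrV /=; split; ring.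
- rewrite -mm' in Q'B *; have [PE P'E] := rotate_common_factor QA Q'B.
  have [-> ->] := IndPM_common_factor Ax PE QA.
  have [-> ->] := IndPM_common_factor Bx P'E Q'B.
  by rewrite /= -signr_odd addnn odd_double mul1r !subrr.
Qed.

Lemma index_defect_common_factor x k A B : (A.[x] != 0) || (B.[x] != 0) ->
    Q = XsubC x ^+ k * A -> Q' = XsubC x ^+ k * B ->
  index_defect x =
    if (A.[x] != 0) && (B.[x] != 0) then 2^-1 * Num.sg (be * A.[x] * B.[x]) else 0.
Proof.
move=> AxBx QA Q'B.
have mup_gt0 C : C != 0 -> (0 < mup x C)%N = (C.[x] == 0).
  by move=> C0; rewrite -XsubC_dvd // dvdp_XsubCl rootE.
have XsubCX_mul_eq0 C : (XsubC x ^+ k * C == 0) = (C == 0).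
  by rewrite mulf_eq0 expf_eq0 polyXsubC_eq0 andbF.
have mult_XsubCX_mul C : C != 0 -> mult x (XsubC x ^+ k * C) = (k + mup x C)%N.
  by move=> C0; rewrite /mult mupM ?expf_neq0 ?polyXsubC_eq0 // mup_XsubCX eqxx.
rewrite /index_defect /half_sg_right Q'B QA !XsubCX_mul_eq0.
have [->|A0] := eqVneq A 0; first by rewrite horner0 eqxx.
have [->|B0] := eqVneq B 0; first by rewrite horner0 eqxx /= !andbF.
rewrite !mult_XsubCX_mul // eqn_add2l.
have -> : (mup x A == mup x B) = (A.[x] != 0) && (B.[x] != 0).
  move: AxBx; rewrite -!mup_gt0 // !lt0n.
  by case: (mup x A) (mup x B) => [|m] [|n].
by rewrite /=; case: ifP => // /andP[Ax Bx]; rewrite !cofval_XsubCX_mul ?rootE.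
Qed.

Lemma half_sg_right_left : Q != 0 -> Q' != 0 -> forall u v, u < v ->
    {in `]u, v[, forall t, ~~ root (Q * Q') t} ->
  half_sg_right u = half_sg_left v.
Proof.
move=> Q0 Q'0 u v uv noroot_QQ'.
have [noroot_Q noroot_Q'] : {in `]u, v[, forall t, ~~ root Q t} /\
                            {in `]u, v[, forall t, ~~ root Q' t}.
  by split=> t /noroot_QQ'; rewrite rootM negb_or => /andP[].
rewrite /half_sg_left /half_sg_right !sgrM (sgr_cofval_next_root Q0 uv noroot_Q).
rewrite (sgr_cofval_next_root Q'0 uv noroot_Q') exprD.
by move: (Num.sg _) (Num.sg _) (Num.sg _) ((-1) ^+ _) ((-1) ^+ _) => *; ring.
Qed.

Lemma IndAB_lt_rotate a b : a < b ->
  IndAB_lt a b P Q - IndAB_lt a b P' Q' = index_defect b - index_defect a.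
Proof.
move=> ab; have [Q0|Q0] := eqVneq Q 0.
  have -> : P' = (al / be)%:P * Q' by rewrite Q0 !mulr0 subr0 addr0 mulrA -polyCM divfK.
  by rewrite IndAB_lt_proportional {1}Q0 IndAB_lt_Q0 /index_defect Q0 eqxx.
have [Q'0|Q'0] := eqVneq Q' 0.
  have PE : P = (- (al / be))%:P * Q.
    have := congr1 (fun S => be^-1%:P * S) Q'0.
    rewrite mulr0 mulrDr mulrA -polyCM mulVf // mul1r => /eqP; rewrite addr_eq0 => /eqP ->.
    by rewrite polyCN polyCM; ring.
  by rewrite {1}PE IndAB_lt_proportional Q'0 IndAB_lt_Q0 /index_defect Q'0 eqxx /= andbF.
have QQ'0 : Q * Q' != 0 by rewrite mulf_neq0.
rewrite /IndAB_lt (@sum_Ind_roots_mulr _ a b P Q Q') //.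
rewrite (@sum_Ind_roots_mulr _ a b P' Q' Q) ?mulf_neq0 // [Q' * Q]mulrC.
have sum_rotate : \sum_(x <- roots (Q * Q') a b) Ind x P Q -
                  \sum_(x <- roots (Q * Q') a b) Ind x P' Q' =
                  \sum_(x <- roots (Q * Q') a b) (half_sg_right x - half_sg_left x).
  rewrite -sumrB; apply: eq_bigr => x _.
  by have [] := IndPM_rotate x Q0 Q'0; rewrite /Ind; lra.
have := telescope_roots QQ'0 ab (half_sg_right_left Q0 Q'0).
have [IndPa _] := IndPM_rotate a Q0 Q'0; have [_ IndMb] := IndPM_rotate b Q0 Q'0.
lra.
Qed.

End Rotation.

Local Open Scope complex_scope.

Section HornerSemilinear.
Variables (S T : comNzRingType) (phi : {rmorphism S -> T}) (f : {additive T -> S}).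
Hypothesis f_phiM : forall r t, f (phi r * t) = r * f t.

Lemma horner_map_semilinear (U : {poly T}) x : (map_poly f U).[x] = f U.[phi x].
Proof.
have size_fU : (size (map_poly f U) <= size U)%N.
  by rewrite map_polyE (leq_trans (size_Poly _)) ?size_map.
rewrite (horner_coef_wide _ size_fU) horner_coef raddf_sum; apply: eq_bigr => i _.
by rewrite coef_map -rmorphXn [U`_i * _]mulrC f_phiM mulrC.
Qed.

Lemma map_poly_semilinear_mul (r : {poly S}) U :
  map_poly f (map_poly phi r * U) = r * map_poly f U.
Proof.
apply/polyP => i; rewrite coef_map !coefM raddf_sum; apply: eq_bigr => j _.
by rewrite !coef_map f_phiM.
Qed.

End HornerSemilinear.

Local Notation reP := (map_poly (@complex.Re _)).
Local Notation imP := (map_poly (@complex.Im _)).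

Section ComplexPoly.
Variable R : rcfType.
Local Notation C := R[i].
Local Notation Re := (@complex.Re R).
Local Notation Im := (@complex.Im R).
Implicit Types (g c : C) (h U : {poly C}) (x : R).

Lemma Re_real_mul (r : R) c : Re (r%:C * c) = r * Re c.
Proof. by case: c => a b; rewrite /= mul0r subr0. Qed.

Lemma Im_real_mul (r : R) c : Im (r%:C * c) = r * Im c.
Proof. by case: c => a b; rewrite /= mul0r addr0. Qed.

Lemma horner_reP h x : (reP h).[x] = Re h.[x%:C].
Proof. by apply: horner_map_semilinear; apply: Re_real_mul. Qed.

Lemma horner_imP h x : (imP h).[x] = Im h.[x%:C].
Proof. by apply: horner_map_semilinear; apply: Im_real_mul. Qed.

Lemma reP_mul_real (r : {poly R}) h : reP (map_poly (real_complex R) r * h) = r * reP h.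
Proof. by apply: map_poly_semilinear_mul; apply: Re_real_mul. Qed.

Lemma imP_mul_real (r : {poly R}) h : imP (map_poly (real_complex R) r * h) = r * imP h.
Proof. by apply: map_poly_semilinear_mul; apply: Im_real_mul. Qed.

Lemma reP_scale g h : reP (g%:P * h) = (Re g)%:P * reP h - (Im g)%:P * imP h.
Proof.
apply/polyP => i; rewrite coefB !coefCM !coef_map coefCM.
by case: g (h`_i) => [? ?] [? ?].
Qed.

Lemma imP_scale g h : imP (g%:P * h) = (Im g)%:P * reP h + (Re g)%:P * imP h.
Proof.
apply/polyP => i; rewrite coefD !coefCM !coef_map coefCM addrC.
by case: g (h`_i) => [? ?] [? ?].
Qed.

Definition half_sg_im g c : R :=
  if (Im c != 0) && (Im (g * c) != 0) then 2^-1 * Num.sg (Im g * Im c * Im (g * c))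
  else 0.

Lemma Im_mul_neq0 g c : Im g != 0 -> c != 0 -> (Im c != 0) || (Im (g * c) != 0).
Proof.
case: g c => [ga gb] [a b] /= gb0; rewrite eq_complex /= negb_and => ab0.
have [b0|//] := eqVneq b 0; rewrite b0 eqxx orbF /= in ab0 *.
by rewrite mulr0 add0r mulf_neq0.
Qed.

Definition scale_defect g h x : R := index_defect (Re g) (Im g) (reP h) (imP h) x.

Lemma IndAB_lt_scale g h a b : Im g != 0 -> a < b ->
  IndAB_lt a b (reP h) (imP h) - IndAB_lt a b (reP (g%:P * h)) (imP (g%:P * h)) =
  scale_defect g h b - scale_defect g h a.
Proof. by move=> g0 ab; rewrite reP_scale imP_scale IndAB_lt_rotate. Qed.

Lemma scale_defect_XsubCX_mul g h x k U : Im g != 0 -> U.[x%:C] != 0 ->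
  h = ('X - (x%:C)%:P) ^+ k * U -> scale_defect g h x = half_sg_im g U.[x%:C].
Proof.
move=> g0 Ux hE.
have XsubCE : ('X - (x%:C)%:P) ^+ k = map_poly (real_complex R) (XsubC x ^+ k).
  by rewrite rmorphXn rmorphB /= map_polyX map_polyC.
have imP_h : imP h = XsubC x ^+ k * imP U by rewrite hE XsubCE imP_mul_real.
have imP_gh : (Im g)%:P * reP h + (Re g)%:P * imP h = XsubC x ^+ k * imP (g%:P * U).
  by rewrite -imP_scale hE mulrCA XsubCE imP_mul_real.
have Im_neq0 : ((imP U).[x] != 0) || ((imP (g%:P * U)).[x] != 0).
  by rewrite !horner_imP hornerCM Im_mul_neq0.
rewrite /scale_defect (index_defect_common_factor Im_neq0 imP_h imP_gh).
by rewrite !horner_imP hornerCM.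
Qed.

Lemma half_sg_im_real_scale g (e : R) c : e != 0 ->
  half_sg_im g (e%:C * c) = half_sg_im g c.
Proof.
move=> e0; rewrite /half_sg_im mulrCA !Im_real_mul !mulf_eq0 (negbTE e0) /=.
case: ifP => // _.
have sg_e2 : Num.sg e * Num.sg e = 1.
  by rewrite -sgrM gtr0_sg // -expr2 exprn_even_gt0 //= e0.
by rewrite !sgrM -[RHS]mulr1 -sg_e2; ring.
Qed.

End ComplexPoly.

Section Slices.
Variable R : rcfType.
Local Notation C := R[i].
Implicit Types (H : bipoly R) (x y : R).

Definition hslice H y : {poly C} := H.[(y%:C)%:P].
Definition vslice H x : {poly C} := map_poly (horner_eval x%:C) H.

Lemma evalY_bre H y : evalY (bre H) y = reP (hslice H y).
Proof.
rewrite /evalY /bre /hslice -map_polyC.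
by apply: (horner_map_semilinear (phi := map_poly (real_complex R))); apply: reP_mul_real.
Qed.

Lemma evalY_bim H y : evalY (bim H) y = imP (hslice H y).
Proof.
rewrite /evalY /bim /hslice -map_polyC.
by apply: (horner_map_semilinear (phi := map_poly (real_complex R))); apply: imP_mul_real.
Qed.

Lemma evalX_bre H x : evalX (bre H) x = reP (vslice H x).
Proof.
by apply/polyP => i; rewrite !coef_map_id0 ?horner0 ?raddf0 //=; apply: horner_reP.
Qed.

Lemma evalX_bim H x : evalX (bim H) x = imP (vslice H x).
Proof.
by apply/polyP => i; rewrite !coef_map_id0 ?horner0 ?raddf0 //=; apply: horner_imP.
Qed.

End Slices.

Section SlicesOfZ.
Variable R : rcfType.
Local Notation C := R[i].
Local Notation polyCC := (fun c : C => c%:P%:P).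
Implicit Types (F G : {poly C}) (x y : R).

Lemma conjc_i : conjc ('i%R : C) = - 'i%R.
Proof. by apply/eqP; rewrite eq_complex /= oppr0 !eqxx. Qed.

Lemma Zpoly_conj : bconj (Zpoly R) = ('X : {poly C})%:P - ('i%R : C)%:P%:P * 'X.
Proof.
rewrite /bconj /Zpoly rmorphD rmorphM /= !map_polyC /= !map_polyX map_polyC.
by rewrite -mulNr -!polyCN -conjc_i.
Qed.

Lemma rmorph_horner_polyCC (f : {rmorphism bipoly R -> {poly C}}) F Z :
  (forall a : C, f a%:P%:P = a%:P) -> f ((map_poly polyCC F).[Z]) = F \Po f Z.
Proof.
move=> fCC; rewrite -horner_map -map_poly_comp /comp_poly; congr (_.[_]).
by apply: eq_map_poly => a /=; rewrite fCC.
Qed.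

Lemma bconj_ofZ G : bconj (ofZ G) = (map_poly polyCC (map_poly conjc G)).[bconj (Zpoly R)].
Proof.
rewrite /ofZ {1}/bconj -horner_map -map_poly_comp -map_poly_comp_id0 ?polyC0 //.
congr (_.[_]); apply: eq_map_poly => a.
by rewrite /= map_polyC; congr (_%:P); apply: map_polyC.
Qed.

Lemma hslice_ofZ F G y : hslice (ofZ F * bconj (ofZ G)) y =
  (F \Po ('X + ('i%R * y%:C)%:P)) * (map_poly conjc G \Po ('X - ('i%R * y%:C)%:P)).
Proof.
have evalCC (a : C) : horner_eval (y%:C)%:P a%:P%:P = a%:P.
  by rewrite horner_evalE hornerC.
rewrite /hslice -horner_evalE rmorphM /= bconj_ofZ !rmorph_horner_polyCC // Zpoly_conj.
by rewrite /= /Zpoly !horner_evalE !(hornerD, hornerN, hornerC, hornerCM, hornerX) polyCM.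
Qed.

Lemma vslice_ofZ F G x : vslice (ofZ F * bconj (ofZ G)) x =
  (F \Po ((x%:C)%:P + ('i%R)%:P * 'X)) *
  (map_poly conjc G \Po ((x%:C)%:P - ('i%R)%:P * 'X)).
Proof.
have evalCC (a : C) : map_poly (horner_eval x%:C) a%:P%:P = a%:P.
  by rewrite map_polyC /= horner_evalE hornerC.
rewrite /vslice (rmorphM (map_poly (horner_eval x%:C))) bconj_ofZ.
rewrite !(rmorph_horner_polyCC (f := map_poly (horner_eval x%:C))) // Zpoly_conj /Zpoly.
rewrite !(rmorphD, rmorphN, rmorphM) /= !map_polyC !map_polyX /=.
by rewrite !horner_evalE hornerX !hornerC.
Qed.

End SlicesOfZ.

Section Vertex.
Variable R : rcfType.
Local Notation C := R[i].
Local Notation Im := (@complex.Im R).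

Lemma exprCi_mul_exprNCi (m n : nat) : ~~ odd (m + n) ->
  ('i%R : C) ^+ m * (- 'i%R) ^+ n = ((-1) ^+ ((m + n)./2 + n))%:C.
Proof.
move=> even_mn; have mnE : (m + n)%N = ((m + n)./2).*2.
  by rewrite -{1}(odd_double_half (m + n)) (negbTE even_mn).
rewrite [(- _) ^+ n]exprNn mulrCA -exprD {1}mnE -mul2n exprM sqrCi -exprD addnC.
by rewrite rmorphXn rmorphN1.
Qed.

Lemma scale_defect_hslice_vslice_ofZ (F G : {poly C}) g x y :
    F != 0 -> G != 0 -> Im g != 0 ->
    ~~ odd (mup (Complex x y) F + mup (Complex x y) G) ->
  let H := ofZ F * bconj (ofZ G) in scale_defect g (hslice H y) x = scale_defect g (vslice H x) y.
Proof.
move=> F0 G0 g0 + H; set z := Complex x y; set zc := x%:C - 'i%R * y%:C.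
have zE : z = x%:C + 'i%R * y%:C.
  by apply/eqP; rewrite eq_complex /= !(mul0r, mulr0, mul1r, subr0, addr0, add0r) !eqxx.
have zcE : conjc z = zc.
  by apply/eqP; rewrite eq_complex /= !(mul0r, mulr0, mul1r, subr0, addr0, add0r, oppr0) !eqxx.
have [Fz FE Fz_z] := mup_factor z F0; have [Gz GE Gz_z] := mup_factor z G0.
move: (mup z F) (mup z G) FE GE => m n FE GE even_mn.
set Gzc := map_poly conjc Gz.
have GcE : map_poly conjc G = ('X - zc%:P) ^+ n * Gzc.
  by rewrite GE -zcE rmorphM rmorphXn rmorphB /= map_polyX map_polyC.
have U0 : Fz.[z] * Gzc.[zc] != 0.
  rewrite -zcE (horner_map conjc) mulf_neq0 -?rootE //.
  by rewrite conjc_eq0 -rootE.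
have hsliceE : hslice H y = ('X - (x%:C)%:P) ^+ (m + n) *
    ((Fz \Po ('X + ('i%R * y%:C)%:P)) * (Gzc \Po ('X - ('i%R * y%:C)%:P))).
  have z_h : ('X - z%:P) \Po ('X + ('i%R * y%:C)%:P) = 'X - (x%:C)%:P.
    by rewrite comp_polyB comp_polyX comp_polyC zE polyCD; ring.
  have zc_h : ('X - zc%:P) \Po ('X - ('i%R * y%:C)%:P) = 'X - (x%:C)%:P.
    by rewrite comp_polyB comp_polyX comp_polyC polyCB; ring.
  by rewrite hslice_ofZ FE GcE !comp_polyM !rmorphXn /= z_h zc_h exprD; ring.
pose p1 := (x%:C)%:P + ('i%R)%:P * 'X; pose p2 := (x%:C)%:P - ('i%R)%:P * 'X.
have vsliceE : vslice H x = ('X - (y%:C)%:P) ^+ (m + n) *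
    (('i%R ^+ m * (- 'i%R) ^+ n)%:P * ((Fz \Po p1) * (Gzc \Po p2))).
  have z_v : ('X - z%:P) \Po p1 = ('i%R)%:P * ('X - (y%:C)%:P).
    by rewrite /p1 comp_polyB comp_polyX comp_polyC zE polyCD polyCM; ring.
  have zc_v : ('X - zc%:P) \Po p2 = (- 'i%R)%:P * ('X - (y%:C)%:P).
    by rewrite /p2 comp_polyB comp_polyX comp_polyC polyCB polyCM polyCN; ring.
  rewrite vslice_ofZ FE GcE !comp_polyM !rmorphXn /= z_v zc_v !exprMn exprD.
  by rewrite polyCM !rmorphXn /= /p1 /p2; ring.
have hU_x : ((Fz \Po ('X + ('i%R * y%:C)%:P)) *
             (Gzc \Po ('X - ('i%R * y%:C)%:P))).[x%:C] = Fz.[z] * Gzc.[zc].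
  by rewrite hornerM !horner_comp !(hornerD, hornerN, hornerX, hornerC) zE.
have vU_y : ((Fz \Po p1) * (Gzc \Po p2)).[y%:C] = Fz.[z] * Gzc.[zc].
  by rewrite hornerM !horner_comp !(hornerD, hornerN, hornerX, hornerC, hornerCM) zE.
rewrite (scale_defect_XsubCX_mul g0 _ hsliceE) ?hU_x // (scale_defect_XsubCX_mul g0 _ vsliceE).
  by rewrite hornerCM vU_y exprCi_mul_exprNCi // half_sg_im_real_scale ?signr_eq0.
by rewrite hornerCM vU_y exprCi_mul_exprNCi // mulf_neq0 // fmorph_eq0 signr_eq0.
Qed.

End Vertex.

Section Winding.
Variable R : rcfType.
Local Notation C := R[i].
Local Notation Im := (@complex.Im R).
Implicit Types (H : bipoly R) (F G : {poly C}) (c g : C) (x y : R).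

Lemma IndAB_ltE a b (P Q : {poly R}) : a < b -> IndAB a b P Q = IndAB_lt a b P Q.
Proof. by move=> ab; rewrite /IndAB ab. Qed.

Lemma IndAB_gtE a b (P Q : {poly R}) : a < b -> IndAB b a P Q = - IndAB_lt a b P Q.
Proof. by move=> ab; rewrite /IndAB lt_gtF // ab. Qed.

Lemma hslice_scale c H y : hslice (c%:P%:P * H) y = c%:P * hslice H y.
Proof. exact: hornerCM. Qed.

Lemma vslice_scale c H x : vslice (c%:P%:P * H) x = c%:P * vslice H x.
Proof. by rewrite /vslice rmorphM /= map_polyC /= horner_evalE hornerC. Qed.

Lemma wind_scale H g x0 x1 y0 y1 : Im g != 0 -> x0 < x1 -> y0 < y1 ->
    (forall x y, x \in [:: x0; x1] -> y \in [:: y0; y1] ->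
       scale_defect g (hslice H y) x = scale_defect g (vslice H x) y) ->
  wind H x0 x1 y0 y1 = wind (g%:P%:P * H) x0 x1 y0 y1.
Proof.
move=> g0 x01 y01 corner.
have [x0_in x1_in] : x0 \in [:: x0; x1] /\ x1 \in [:: x0; x1] by rewrite !inE !eqxx orbT.
have [y0_in y1_in] : y0 \in [:: y0; y1] /\ y1 \in [:: y0; y1] by rewrite !inE !eqxx orbT.
rewrite /wind !evalY_bre !evalY_bim !evalX_bre !evalX_bim !hslice_scale !vslice_scale.
rewrite !(IndAB_ltE _ _ x01) !(IndAB_ltE _ _ y01) !(IndAB_gtE _ _ x01) !(IndAB_gtE _ _ y01).
have := IndAB_lt_scale (hslice H y0) g0 x01; have := IndAB_lt_scale (hslice H y1) g0 x01.
have := IndAB_lt_scale (vslice H x0) g0 y01; have := IndAB_lt_scale (vslice H x1) g0 y01.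
have := corner _ _ x0_in y0_in; have := corner _ _ x0_in y1_in.
have := corner _ _ x1_in y0_in; have := corner _ _ x1_in y1_in.
move: (IndAB_lt _ _ _ _) (IndAB_lt _ _ _ _) (IndAB_lt _ _ _ _) (IndAB_lt _ _ _ _).
move: (IndAB_lt _ _ _ _) (IndAB_lt _ _ _ _) (IndAB_lt _ _ _ _) (IndAB_lt _ _ _ _).
move: (scale_defect _ _ _) (scale_defect _ _ _) (scale_defect _ _ _) (scale_defect _ _ _).
move: (scale_defect _ _ _) (scale_defect _ _ _) (scale_defect _ _ _) (scale_defect _ _ _).
move=> *; lra.
Qed.

Lemma ofZ_scale c F : ofZ (c%:P * F) = c%:P%:P * ofZ F.
Proof.
rewrite /ofZ -hornerCM; congr (_.[_]); apply/polyP => i.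
by rewrite coefCM !coef_map_id0 ?polyC0 // coefCM !polyCM.
Qed.

Lemma dvdz2_subn (m n : nat) : (2 %| m%:Z - n%:Z)%Z = ~~ odd (m + n).
Proof.
rewrite dvdzE /= dvdn2 oddD.
have [mn|/ltnW nm] := leqP m n; last by rewrite distnEl // oddB.
by rewrite distnEr // oddB // addbC.
Qed.

Lemma windQ_scale_nonreal F G g x0 x1 y0 y1 :
    F != 0 -> G != 0 -> Im g != 0 -> x0 < x1 -> y0 < y1 ->
    (forall z, z \in [:: Complex x0 y0; Complex x1 y0; Complex x1 y1; Complex x0 y1] ->
       (2 %| valC z F G)%Z) ->
  windQ (ofZ F) (ofZ G) x0 x1 y0 y1 = windQ (ofZ (g%:P * F)) (ofZ G) x0 x1 y0 y1.
Proof.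
move=> F0 G0 g0 x01 y01 even_val; rewrite /windQ ofZ_scale -mulrA.
apply: wind_scale => // x y x_in y_in; apply: scale_defect_hslice_vslice_ofZ => //.
rewrite -dvdz2_subn; apply: even_val.
by move: x_in y_in; rewrite !inE => /orP[]/eqP-> /orP[]/eqP->; rewrite !eqxx ?orbT.
Qed.

End Winding.

Theorem lemma3p5 (R : rcfType) (F G : {poly R[i]}) (gamma : R[i])
    (x0 x1 y0 y1 : R) :
  F != 0 -> G != 0 -> gamma != 0 ->
  x0 < x1 -> y0 < y1 ->
  (forall z : R[i], z \in [:: Complex x0 y0; Complex x1 y0;
                              Complex x1 y1; Complex x0 y1] ->
     (2 %| valC z F G)%Z) ->
  windQ (ofZ F) (ofZ G) x0 x1 y0 y1 =
  windQ (ofZ (gamma%:P * F)) (ofZ G) x0 x1 y0 y1.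
Proof.
move=> F0 G0 gamma0 x01 y01.
set vertices := [:: Complex x0 y0; _; _; _] => even_val.
have [Im_gamma|Im_gamma] := eqVneq (complex.Im gamma) 0; last exact: windQ_scale_nonreal.
have Im_i : complex.Im ('i%R : R[i]) != 0 by rewrite oner_eq0.
have Im_gamma_i : complex.Im (gamma * - 'i%R) != 0.
  rewrite -complexiE; move: gamma0 Im_gamma; case: gamma => a b /= gamma0 b0.
  rewrite b0 eq_complex /= eqxx andbT in gamma0.
  by rewrite b0 mulrN1 mul0r addr0 oppr_eq0.
have iF0 : 'i%R%:P * F != 0 by rewrite mulf_neq0 ?polyC_eq0 ?neq0Ci.
have even_val_iF z : z \in vertices -> (2 %| valC z ('i%R%:P * F) G)%Z.
  by move=> /even_val; rewrite /valC mupMr ?rootC ?neq0Ci.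
rewrite (windQ_scale_nonreal F0 G0 Im_i x01 y01 even_val).
rewrite (windQ_scale_nonreal iF0 G0 Im_gamma_i x01 y01 even_val_iF) mulrA -polyCM.
by rewrite -mulrA mulNr -expr2 sqrCi opprK mulr1.
Qed.
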